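(* $\mathrm{Pol}(\mathbb{M}_1)$ does not satisfy $\Sigma_1$, but $\mathcal{C}_2$ satisfies $\Sigma_1$.
   Context: $\mathbb{M}_1=(\{0,1,2\};\psi_2,\mu_2,\{0\},\{1\},\{2\})$ with $\psi_2=\{(0,1),(1,0),(2,2)\}$ and $\mu_2$ the equivalence relation with classes $\{0,1\},\{2\}$; $\mathcal{C}_2=\mathrm{Pol}(\{0,1\};\neq,\{0\},\{1\})$, where $\mathrm{Pol}$ denotes the clone of all operations preserving the given relations. A clone satisfies $\Sigma_1$ if it contains a ternary operation $f$ that is a quasi majority operation, i.e. $f(x,y,y)\approx f(y,x,y)\approx f(y,y,x)\approx f(y,y,y)$, and additionally satisfies $f(x,y,z)\approx f(z,y,x)$. *)

From mathcomp Require Import all_boot.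
Set Implicit Arguments. Unset Strict Implicit. Unset Printing Implicit Defensive.

Definition op (T : Type) (n : nat) := ('I_n -> T) -> T.

Definition preserves1 (T : Type) n (f : op T n) (U : T -> bool) : Prop :=
  forall a : 'I_n -> T, (forall i, U (a i)) -> U (f a).

Definition preserves2 (T : Type) n (f : op T n) (R : T -> T -> bool) : Prop :=
  forall a b : 'I_n -> T, (forall i, R (a i) (b i)) -> R (f a) (f b).

Definition clone_pred (T : Type) := forall n, op T n -> Prop.

Definition op3 (T : Type) (f : T -> T -> T -> T) : op T 3 :=
  fun a => f (a (inord 0)) (a (inord 1)) (a (inord 2)).

Definition Sigma1 (T : Type) (C : clone_pred T) : Prop :=
  exists f : T -> T -> T -> T,
    C 3 (op3 f) /\
    (forall x y, f x y y = f y x y /\ f y x y = f y y x /\ f y y x = f y y y) /\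
    (forall x y z, f x y z = f z y x).

Definition psi2 (a b : 'I_3) : bool :=
  ((val a == 0) && (val b == 1)) || ((val a == 1) && (val b == 0))
  || ((val a == 2) && (val b == 2)).
Definition mu2 (a b : 'I_3) : bool := (val a == 2) == (val b == 2).
Definition singl3 (k : nat) (a : 'I_3) : bool := val a == k.

Definition PolM1 : clone_pred 'I_3 := fun n f =>
  [/\ preserves2 f psi2, preserves2 f mu2,
      preserves1 f (singl3 0), preserves1 f (singl3 1) & preserves1 f (singl3 2)].

Definition neq2 (a b : 'I_2) : bool := a != b.
Definition singl2 (k : nat) (a : 'I_2) : bool := val a == k.

Definition C2 : clone_pred 'I_2 := fun n f =>
  [/\ preserves2 f neq2, preserves1 f (singl2 0) & preserves1 f (singl2 1)].

(** A symmetric operation [f] preserving [psi2] sends the columns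
    (0,1), (2,2), (1,0) to the related pair (f(0,2,1), f(1,2,0)) = (f(0,2,1), f(0,2,1)),
    so f(0,2,1) is a loop of [psi2], i.e. equals 2.  Preservation of [mu2] on the columns
    (0,0), (2,2), (1,0) puts f(0,2,1) in the class of f(0,2,0), and quasi majority with
    idempotence gives f(0,2,0) = f(0,0,0) = 0, so f(0,2,1) lies in {0,1}: contradiction.
    On {0,1} the majority operation is self-dual, conservative and symmetric in its outer
    arguments, so it witnesses Sigma_1 for C_2. *)

From mathcomp Require Import all_boot.

Section Op3.

Variables (T : Type) (f : T -> T -> T -> T).

Definition col3 (x y z : T) (i : 'I_3) : T := nth x [:: x; y; z] i.

Lemma op3_col3 x y z : op3 f (col3 x y z) = f x y z.
Proof. by rewrite /op3 /col3 !inordK. Qed.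

Lemma preserves1_op3P (U : T -> bool) :
  preserves1 (op3 f) U <-> forall x y z, U x -> U y -> U z -> U (f x y z).
Proof.
split=> [presU x y z Ux Uy Uz | presU a Ua]; last exact: presU.
by rewrite -op3_col3; apply: presU; case=> [[|[|[|]]] ?].
Qed.

Lemma preserves2_op3P (R : T -> T -> bool) :
  preserves2 (op3 f) R <->
  forall x y z x' y' z', R x x' -> R y y' -> R z z' -> R (f x y z) (f x' y' z').
Proof.
split=> [presR x y z x' y' z' Rx Ry Rz | presR a b Rab]; last exact: presR.
by rewrite -!op3_col3; apply: presR; case=> [[|[|[|]]] ?].
Qed.

End Op3.

Definition i3_0 : 'I_3 := @Ordinal 3 0 isT.
Definition i3_1 : 'I_3 := @Ordinal 3 1 isT.
Definition i3_2 : 'I_3 := @Ordinal 3 2 isT.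

Lemma PolM1_not_Sigma1 : ~ Sigma1 PolM1.
Proof.
case=> f [[/preserves2_op3P psi2_f /preserves2_op3P mu2_f /preserves1_op3P f0 _ _]
           [quasi_maj sym_f]].
have f000 : f i3_0 i3_0 i3_0 = i3_0 by apply/val_inj/eqP/f0.
have f020 : f i3_0 i3_2 i3_0 = i3_0.
  by have [_ [-> ->]] := quasi_maj i3_2 i3_0; exact: f000.
have loop : psi2 (f i3_0 i3_2 i3_1) (f i3_0 i3_2 i3_1).
  by rewrite {2}sym_f; apply: psi2_f.
have same_class : mu2 (f i3_0 i3_2 i3_1) i3_0.
  by rewrite -{2}f020; apply: mu2_f.
by move: loop same_class; rewrite /psi2 /mu2; case: (f _ _ _) => [[|[|[|]]] ?].
Qed.

Definition majority {T : eqType} (x y z : T) : T := if x == y then x else z.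

Section Majority.

Variable T : eqType.
Implicit Types x y z : T.

Lemma majority_quasi_majority x y :
  majority x y y = majority y x y /\ majority y x y = majority y y x /\
  majority y y x = majority y y y.
Proof. by rewrite /majority eqxx if_same; case: eqP => [->|]. Qed.

Lemma majority_conservative (U : pred T) x y z : U x -> U z -> U (majority x y z).
Proof. by rewrite /majority; case: ifP. Qed.

End Majority.

Lemma majority_outer_sym (x y z : 'I_2) : majority x y z = majority z y x.
Proof.
by apply: val_inj; case: x => [[|[|//]] ?]; case: y => [[|[|//]] ?]; case: z => [[|[|//]] ?].
Qed.

Lemma majority_self_dual (x y z x' y' z' : 'I_2) :
  x != x' -> y != y' -> z != z' -> majority x y z != majority x' y' z'.
Proof.
case: x => [[|[|//]] ?]; case: y => [[|[|//]] ?]; case: z => [[|[|//]] ?];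
case: x' => [[|[|//]] ?]; case: y' => [[|[|//]] ?]; by case: z' => [[|[|//]] ?].
Qed.

Lemma C2_Sigma1 : Sigma1 C2.
Proof.
exists majority; split; last first.
  by split; [exact: majority_quasi_majority | exact: majority_outer_sym].
split; first exact/preserves2_op3P/majority_self_dual.
all: by apply/preserves1_op3P => x y z Ux _ Uz; apply: majority_conservative.
Qed.

Theorem lemma6p7 : ~ Sigma1 PolM1 /\ Sigma1 C2.
Proof. exact: (conj PolM1_not_Sigma1 C2_Sigma1). Qed.
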